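(* Let $K$ be a finite simplicial complex with positive edge lengths, and let $h\in H_d(K;\mathbb{Z}_2)$ be a homology class. Let $z_r$ be a cycle in $h$ of minimal radius and $z_d$ a cycle in $h$ of minimal diameter. Then $\mathrm{diam}(z_r)\le 2\,\mathrm{diam}(z_d)$.
   Context: For vertices $p,q$ of $K$, $\mathrm{dist}(p,q)$ is the length of a shortest path between them in the 1-skeleton of $K$. For a cycle $z$ with vertex set $\mathrm{Vert}(z)$: $\mathrm{diam}(z)=\max_{p,q\in\mathrm{Vert}(z)}\mathrm{dist}(p,q)$ and $\mathrm{rad}(z)=\min_{p\in\mathrm{Vert}(K)}\max_{q\in\mathrm{Vert}(z)}\mathrm{dist}(p,q)$. Thus $z_r=\arg\min_{z\in h}\mathrm{rad}(z)$ and $z_d=\arg\min_{z\in h}\mathrm{diam}(z)$. *)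

From HB Require Import structures.
From mathcomp Require Import all_boot all_order all_algebra.
From mathcomp Require Import classical_sets reals constructive_ereal ereal.
Set Implicit Arguments. Unset Strict Implicit. Unset Printing Implicit Defensive.
Import Order.TTheory GRing.Theory Num.Theory.
Local Open Scope ring_scope.


Section Complexes.
Variable V : finType.

(* A finite (abstract) simplicial complex on the vertex type V: a family of
   nonempty vertex sets closed under taking nonempty subsets. A k-simplex
   has k+1 vertices. *)
Definition is_simplicial_complex (K : {set {set V}}) : Prop :=
  (forall s, s \in K -> s != finset.set0) /\
  (forall s (t : {set V}), s \in K -> t \subset s -> t != finset.set0 -> t \in K).

(* Z_2 d-chains of K = sets of d-simplices of K. Addition = symmetric difference. *)
Definition is_chain (K : {set {set V}}) (d : nat) (c : {set {set V}}) : Prop :=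
  c \subset [set s in K | #|s| == d.+1].

Definition chain_add (c1 c2 : {set {set V}}) : {set {set V}} :=
  (c1 :\: c2) :|: (c2 :\: c1).

(* Z_2 boundary of a d-chain: the (d-1)-faces contained in an odd number of
   simplices of c. The boundary of a 0-chain is 0 (non-augmented homology). *)
Definition bdry (d : nat) (c : {set {set V}}) : {set {set V}} :=
  [set f : {set V} | [&& (0 < d)%N, #|f| == d & odd #|[set s in c | f \subset s]|]].

Definition is_cycle K d (z : {set {set V}}) : Prop :=
  is_chain K d z /\ bdry d z = finset.set0.

Definition is_boundary K d (c : {set {set V}}) : Prop :=
  exists b, is_chain K d.+1 b /\ bdry d.+1 b = c.

Definition in_class K d (z0 z : {set {set V}}) : Prop :=
  is_cycle K d z /\ is_boundary K d (chain_add z z0).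

Definition Vert (z : {set {set V}}) : {set V} := \bigcup_(s in z) s.

End Complexes.

Section Metric.
Variables (R : realType) (V : finType) (K : {set {set V}}) (w : {set V} -> R).

Definition adj (x y : V) : bool := (x != y) && ([set x; y] \in K).

Definition walk_len (x : V) (s : seq V) : R :=
  \sum_(e <- pairmap (fun a b => [set a; b]) x s) w e.

(* shortest-path distance in the weighted 1-skeleton (+oo if unreachable) *)
Definition dist (p q : V) : \bar R :=
  ereal_inf [set (walk_len p s)%:E | s in
              [set s : seq V | path adj p s && (last p s == q)]]%classic.

(* max over an empty vertex set is taken to be 0 *)
Definition diam (z : {set {set V}}) : \bar R :=
  \big[maxe/0%E]_(p in Vert z) \big[maxe/0%E]_(q in Vert z) dist p q.

Definition rad (z : {set {set V}}) : \bar R :=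
  \big[mine/+oo%E]_(p : V) \big[maxe/0%E]_(q in Vert z) dist p q.

End Metric.

From Pilot Require Import Defs.
From HB Require Import structures.
From mathcomp Require Import all_boot all_order all_algebra.
From mathcomp Require Import classical_sets reals constructive_ereal ereal.
Set Implicit Arguments.
Unset Strict Implicit.
Unset Printing Implicit Defensive.

Import Order.TTheory GRing.Theory Num.Theory.
Local Open Scope ring_scope.

(* The triangle inequality through a centre
   of z_r gives diam z_r <= 2 rad z_r; minimality of z_r gives
   rad z_r <= rad z_d; and taking a vertex of z_d as a centre gives
   rad z_d <= diam z_d. *)

Section Walks.
Variables (R : realType) (V : finType) (w : {set V} -> R).

Lemma walk_len_cat x s1 s2 :
  walk_len w x (s1 ++ s2) = walk_len w x s1 + walk_len w (last x s1) s2.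
Proof. by rewrite /walk_len pairmap_cat big_cat. Qed.

Lemma walk_len_rcons x s y :
  walk_len w x (rcons s y) = walk_len w x s + w [set last x s; y].
Proof. by rewrite -cats1 walk_len_cat /walk_len /= big_seq1. Qed.

Lemma last_rev_belast (T : Type) (x : T) s : last (last x s) (rev (belast x s)) = x.
Proof. by case: s => [|y s] //=; rewrite rev_cons last_rcons. Qed.

Lemma walk_len_rev x s :
  walk_len w (last x s) (rev (belast x s)) = walk_len w x s.
Proof.
elim: s x => [|y s IHs] x //=.
rewrite rev_cons walk_len_rcons IHs last_rev_belast addrC.
by rewrite /walk_len big_cons /= finset.setUC.
Qed.

End Walks.

Section Distance.
Variables (R : realType) (V : finType) (K : {set {set V}}) (w : {set V} -> R).
Hypothesis w_ge0 : forall e, e \in K -> #|e| = 2%N -> 0 <= w e.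

Lemma adj_sym : symmetric (adj K).
Proof. by move=> x y; rewrite /adj eq_sym finset.setUC. Qed.

Lemma walk_len_ge0 x s : path (adj K) x s -> 0 <= walk_len w x s.
Proof.
elim: s x => [|y s IHs] x /=; first by rewrite /walk_len big_nil.
case/andP=> /andP[xy xyK] ys; rewrite /walk_len big_cons /=.
by rewrite addr_ge0 ?IHs // w_ge0 // cards2 xy.
Qed.

Lemma dist_ge0 p q : (0 <= dist K w p q)%E.
Proof.
apply: le_ereal_inf_tmp => _ [s /= /andP[ps _] <-].
by rewrite lee_fin walk_len_ge0.
Qed.

Lemma dist_sym p q : dist K w p q = dist K w q p.
Proof.
suff le_dist x y : (dist K w x y <= dist K w y x)%E by apply/le_anti/andP.
apply: le_ereal_inf_tmp => _ [s /= /andP[ys /eqP <-] <-].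
apply: ereal_inf_lbound; exists (rev (belast y s)); last by rewrite walk_len_rev.
rewrite /= rev_path last_rev_belast eqxx andbT.
by rewrite (@eq_path _ _ (adj K)) // => u v; exact: adj_sym.
Qed.

(* Concatenate walks; d(p,b) is moved across the inequality, which needs it finite. *)
Lemma dist_triangle a p b : (dist K w a b <= dist K w a p + dist K w p b)%E.
Proof.
have [->|pb_fin] := eqVneq (dist K w p b) +oo%E.
  by rewrite addey ?leey // gt_eqF // (lt_le_trans _ (dist_ge0 a p)) ?ltNy0.
have pb_num : dist K w p b \is a fin_num.
  by rewrite ge0_fin_numE ?dist_ge0 // lt_neqAle pb_fin leey.
rewrite -leeBlDr //; apply: le_ereal_inf_tmp => _ [s1 /= /andP[ps1 /eqP ps1p] <-].
rewrite leeBlDr // -leeBlDl //; apply: le_ereal_inf_tmp => _ [s2 /= /andP[ps2 pb] <-].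
rewrite EFinN leeBlDl // -EFinD; apply: ereal_inf_lbound; exists (s1 ++ s2).
  by rewrite /= cat_path last_cat ps1p ps1 ps2.
by rewrite walk_len_cat ps1p.
Qed.

End Distance.

Section Eccentricity.
Variables (R : realType) (V : finType) (K : {set {set V}}) (w : {set V} -> R).
Hypothesis w_ge0 : forall e, e \in K -> #|e| = 2%N -> 0 <= w e.

Definition ecc (z : {set {set V}}) (p : V) : \bar R :=
  \big[maxe/0%E]_(q in Vert z) dist K w p q.

Lemma ecc_ge0 z p : (0 <= ecc z p)%E.
Proof. exact: bigmax_ge_id. Qed.

Lemma rad_le_ecc z p : (Defs.rad K w z <= ecc z p)%E.
Proof. exact: bigmin_le. Qed.

Lemma ecc_le_diam z p : p \in Vert z -> (ecc z p <= Defs.diam K w z)%E.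
Proof. exact: le_bigmax_cond. Qed.

Lemma diam_le_ecc z p : (Defs.diam K w z <= ecc z p + ecc z p)%E.
Proof.
have ecc_ge0_2 : (0 <= ecc z p + ecc z p)%E by rewrite adde_ge0 ?ecc_ge0.
apply: bigmax_le => // x x_z; apply: bigmax_le => // y y_z.
rewrite (le_trans (dist_triangle w_ge0 x p y)) // dist_sym //.
by rewrite leeD ?le_bigmax_cond.
Qed.

Lemma diam_le_rad z : (Defs.diam K w z <= Defs.rad K w z + Defs.rad K w z)%E.
Proof.
rewrite /Defs.rad; elim/big_ind: _ => [|x y|p _]; last exact: diam_le_ecc.
- by rewrite addey ?leey.
- by rewrite minEle; case: ifP.
Qed.

(* The vertex [a] is needed: over an empty vertex type, rad z = +oo. *)
Lemma rad_le_diam z (a : V) : (Defs.rad K w z <= Defs.diam K w z)%E.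
Proof.
have [Vz0|[p p_z]] := set_0Vmem (Vert z).
  by rewrite (le_trans (rad_le_ecc z a)) // /ecc Vz0 big_set0 bigmax_ge_id.
exact: le_trans (rad_le_ecc z p) (ecc_le_diam p_z).
Qed.

End Eccentricity.

Theorem theorem2p6 (R : realType) (V : finType) (K : {set {set V}})
  (w : {set V} -> R) (d : nat) (z0 zr zd : {set {set V}}) :
  is_simplicial_complex K ->
  (forall e, e \in K -> (#|e| = 2)%N -> 0 < w e) ->
  is_cycle K d z0 ->
  in_class K d z0 zr ->
  (forall z, in_class K d z0 z -> (Defs.rad K w zr <= Defs.rad K w z)%E) ->
  in_class K d z0 zd ->
  (forall z, in_class K d z0 z -> (Defs.diam K w zd <= Defs.diam K w z)%E) ->
  (Defs.diam K w zr <= 2%:E * Defs.diam K w zd)%E.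
Proof.
move=> _ w_gt0 _ _ zr_min zd_class _.
have w_ge0 e (eK : e \in K) (e2 : #|e| = 2%N) : 0 <= w e := ltW (w_gt0 e eK e2).
have [Vzr0|[a _]] := set_0Vmem (Vert zr).
  by rewrite /Defs.diam Vzr0 big_set0 mule_ge0 ?bigmax_ge_id.
rewrite (mule_natl _ 2) mule2n (le_trans (diam_le_rad w_ge0 zr)) //.
have rad_zr_le : (Defs.rad K w zr <= Defs.diam K w zd)%E.
  exact: le_trans (zr_min _ zd_class) (rad_le_diam K w zd a).
exact: leeD.
Qed.
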